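(* Let $n\ge 2$ and let $\mathsf r=[r_1,\dots,r_{2n-2}]$ be a tree-like factorization of $\lambda_n$. For $j=1,\dots,2n-2$, the element $(r_1\cdots r_{j-1})\,r_j\,(r_{j-1}\cdots r_1)$ is a reflection of the form $(\!(0,m_j)\!)$, where $m_j$ is its value at $0$. Then $\mathsf r$ is cyclic if and only if $m_1<m_2<\dots<m_{2n-2}$.
   Context: The affine symmetric group $\widetilde S_n$ is the group, under composition $(vw)(k)=v(w(k))$, of bijections $w:\mathbb Z\to\mathbb Z$ with $w(i+n)=w(i)+n$ and $\sum_{i=1}^n w(i)=\binom{n+1}{2}$. For $i\not\equiv j\pmod n$, $(\!(i,j)\!)$ is the affine reflection interchanging $i+kn$ and $j+kn$ for all $k\in\mathbb Z$; $(\!(i,j)\!)=(\!(j,i)\!)=(\!(i+kn,j+kn)\!)$. For an integer $i$, ''$i\bmod n$'' denotes the representative of $i$ modulo $n$ in $\{1,\dots,n\}$. Let $\lambda_n$ be the element with $\lambda_n(k)=k+n$ for $k\not\equiv0\pmod n$ and $\lambda_n(k)=k-n(n-1)$ for $k\equiv 0\pmod n$; its reflection length is $2n-2$. $\textsc{fact}(\lambda_n)$ is the set of sequences $[r_1,\dots,r_{2n-2}]$ of reflections with $r_1\cdots r_{2n-2}=\lambda_n$. Such a sequence is tree-like if one can write $r_i=(\!(a_{i-1},b_i)\!)$ with integers $a_{i-1}<b_i$ ($1\le i\le 2n-2$) and $a_i\equiv b_i\pmod n$ ($1\le i\le 2n-3$). For a tree-like $\mathsf r$ so written and $k\in[n]$,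 let $N_{\mathsf r}(k)$ be the list, in increasing order of $i$, of the values $b_i\bmod n$ over all $i$ with $a_{i-1}\equiv k\pmod n$. A tree-like $\mathsf r$ is cyclic if (i) $N_{\mathsf r}(n)$ is strictly increasing, and (ii) for every $1\le k<n$, writing $N_{\mathsf r}(k)=[c_1,\dots,c_\ell]$, there exists $1\le j\le \ell$ with $c_j<c_{j+1}<\dots<c_{\ell-1}<k<c_1<\dots<c_{j-1}$ (note $c_\ell$ does not appear; it is replaced by $k$). *)

(* affine permutations as functions Z -> Z. *)
From Stdlib Require Import ZArith List Sorting.Sorted Lia.
Import ListNotations.
Open Scope Z_scope.

(* The affine reflection ((i,j)) in \tilde S_n: swaps i+kn and j+kn for all k. *)
Definition refl (n i j : Z) : Z -> Z :=
  fun k => if Z.eq_dec (k mod n) (i mod n) then k - i + j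
           else if Z.eq_dec (k mod n) (j mod n) then k - j + i
           else k.

Definition is_reflection (n : Z) (w : Z -> Z) : Prop :=
  exists i j, i mod n <> j mod n /\ forall k, w k = refl n i j k.

Definition lambda (n : Z) : Z -> Z :=
  fun k => if Z.eqb (k mod n) 0 then k - n * (n - 1) else k + n.

(* product r_1 r_2 ... r_m, with (vw)(k) = v(w(k)) *)
Definition prodl (l : list (Z -> Z)) : Z -> Z :=
  fold_right (fun f g => fun k => f (g k)) (fun k => k) l.

(* 1-based access: r_i *)
Definition nthr (r : list (Z -> Z)) (i : nat) : Z -> Z :=
  nth (i - 1) r (fun k => k).

Definition in_fact (n : Z) (r : list (Z -> Z)) : Prop :=
  Z.of_nat (length r) = 2 * n - 2 /\
  Forall (is_reflection n) r /\
  forall k, prodl r k = lambda n k.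

Definition tree_like_with (n : Z) (r : list (Z -> Z)) (a b : nat -> Z) : Prop :=
  (forall i : nat, (1 <= i <= length r)%nat ->
     a (i - 1)%nat < b i /\ forall k, nthr r i k = refl n (a (i - 1)%nat) (b i) k) /\
  (forall i : nat, (1 <= i <= length r - 1)%nat -> a i mod n = b i mod n).

Definition tree_like (n : Z) (r : list (Z -> Z)) : Prop :=
  exists a b, tree_like_with n r a b.

(* "x mod n": representative in {1, ..., n} *)
Definition modn1 (n x : Z) : Z := (x - 1) mod n + 1.

Definition Nr (n : Z) (r : list (Z -> Z)) (a b : nat -> Z) (k : Z) : list Z :=
  map (fun i => modn1 n (b i))
      (filter (fun i => Z.eqb ((a (i - 1)%nat - k) mod n) 0) (seq 1 (length r))).

(* condition (ii) for a given list c = [c_1, ..., c_l] and k: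
   exists 1 <= j <= l with c_j < ... < c_{l-1} < k < c_1 < ... < c_{j-1} *)
Definition cyc_cond (c : list Z) (k : Z) : Prop :=
  exists j : nat, (1 <= j <= length c)%nat /\
    Sorted Z.lt (skipn (j - 1) (removelast c) ++ [k] ++ firstn (j - 1) c).

Definition cyclic (n : Z) (r : list (Z -> Z)) : Prop :=
  exists a b, tree_like_with n r a b /\
    Sorted Z.lt (Nr n r a b n) /\
    (forall k, 1 <= k < n -> cyc_cond (Nr n r a b k) k).

Definition conjr (r : list (Z -> Z)) (j : nat) : Z -> Z :=
  fun x => prodl (firstn (j - 1) r)
             (nthr r j (prodl (rev (firstn (j - 1) r)) x)).

Definition mval (r : list (Z -> Z)) (j : nat) : Z := conjr r j 0.

(* Translating the tree-like pairs (a_{i-1}, b_i) by multiples of n gives a walk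
   y_0 < y_1 < ... < y_{2n-2} with r_i = ((y_{i-1}, y_i)), and then
   (r_1...r_{j-1}) r_j (r_{j-1}...r_1) = ((0, m_j)) with m_j = (r_1...r_{j-1})(y_j) - y_0.
   Follow each residue v in {1, ..., n-1} through r_1, r_2, ...: at step t it moves down by
   the gap y_t - y_{t-1} exactly when it sits in the class of y_t, and since the product is
   lambda_n its total displacement is n.  No gap is a multiple of n, so every residue moves at
   least twice; as each of the 2n-2 steps moves exactly one residue, each moves exactly twice,
   namely when the walk y mod n enters v and when it returns from v to its parent.  Hence all
   gaps lie in (0, n), m_j = y_j - y_0 if step j enters a vertex, and m_j gains the gap of the
   entering edge if step j leaves one.  So m is increasing iff leaving a vertex and immediately
   entering a sibling always increases the gap.  Read relative to k modulo n, N_r(k) lists the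
   gaps of the edges out of k, and conditions (i) and (ii) say that these gaps increase up to
   the edge back to the parent of k, which is the same condition. *)

From Stdlib Require Import ZArith List Sorting.Sorted Lia.
Import ListNotations.
Open Scope Z_scope.

Lemma mod_translate n a b x : x mod n = a mod n -> (x - a + b) mod n = b mod n.
Proof. intros [k Hk]%Z.cong_iff_ex. apply Z.cong_iff_ex. exists k. lia. Qed.

Lemma mod_compat_of_add_mul n (f : Z -> Z) : (forall x k, f (x + k * n) = f x + k * n) ->
  forall x x', x mod n = x' mod n -> f x mod n = f x' mod n.
Proof.
  intros Hf x x' [k Hk]%Z.cong_iff_ex. replace x with (x' + k * n) by lia.
  rewrite Hf. apply Z_mod_plus_full.
Qed.

Section Reflection.
Variables n a b : Z.

Lemma refl_cases x :
  x mod n = a mod n /\ refl n a b x = x - a + b \/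
  x mod n = b mod n /\ refl n a b x = x - b + a \/
  x mod n <> a mod n /\ x mod n <> b mod n /\ refl n a b x = x.
Proof.
  unfold refl.
  destruct (Z.eq_dec (x mod n) (a mod n)); [now left|].
  destruct (Z.eq_dec (x mod n) (b mod n)); [now right; left|now right; right].
Qed.

Lemma refl_add_mul x k : refl n a b (x + k * n) = refl n a b x + k * n.
Proof.
  unfold refl. rewrite Z_mod_plus_full.
  destruct (Z.eq_dec (x mod n) (a mod n)); [lia|].
  destruct (Z.eq_dec (x mod n) (b mod n)); lia.
Qed.

Lemma refl_mod x :
  refl n a b x mod n =
  if Z.eq_dec (x mod n) (a mod n) then b mod n
  else if Z.eq_dec (x mod n) (b mod n) then a mod n else x mod n.
Proof.
  unfold refl.
  destruct (Z.eq_dec (x mod n) (a mod n)); [now apply mod_translate|].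
  destruct (Z.eq_dec (x mod n) (b mod n)); [now apply mod_translate|easy].
Qed.

Lemma refl_mod_same x : a mod n = b mod n -> refl n a b x mod n = x mod n.
Proof. intros Hab. rewrite refl_mod. repeat destruct Z.eq_dec; congruence. Qed.

Lemma refl_translate a' b' :
  a mod n = a' mod n -> b - a = b' - a' -> forall x, refl n a b x = refl n a' b' x.
Proof.
  intros Ha Hd x. pose proof Ha as [k Hk]%Z.cong_iff_ex.
  assert (Hb : b mod n = b' mod n) by (apply Z.cong_iff_ex; exists k; lia).
  unfold refl. rewrite Ha, Hb.
  destruct (Z.eq_dec (x mod n) (a' mod n)); [lia|].
  destruct (Z.eq_dec (x mod n) (b' mod n)); lia.
Qed.

Lemma refl_ends_unique a' b' : a < b -> a' < b' ->
  (forall x, refl n a b x = refl n a' b' x) -> a mod n = a' mod n /\ b mod n = b' mod n.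
Proof.
  intros Hab Hab' E. specialize (E a). unfold refl in E.
  destruct (Z.eq_dec (a mod n) (a mod n)) as [_|]; [|easy].
  destruct (Z.eq_dec (a mod n) (a' mod n)) as [Ha|].
  - split; [easy|]. pose proof Ha as [k Hk]%Z.cong_iff_ex.
    apply Z.cong_iff_ex. exists k. lia.
  - destruct (Z.eq_dec (a mod n) (b' mod n)); lia.
Qed.

Lemma refl_mod_inj x x' :
  refl n a b x mod n = refl n a b x' mod n -> x mod n = x' mod n.
Proof. rewrite !refl_mod. repeat destruct Z.eq_dec; congruence. Qed.

Hypothesis ab_ncong : a mod n <> b mod n.

Lemma refl_involutive x : refl n a b (refl n a b x) = x.
Proof.
  destruct (refl_cases x) as [[Hx ->]|[[Hx ->]|[_ [_ E]]]]; [| |now rewrite !E].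
  - pose proof (mod_translate n a b x Hx).
    destruct (refl_cases (x - a + b)) as [[? _]|[[_ ->]|[_ [? _]]]]; (congruence || lia).
  - pose proof (mod_translate n b a x Hx).
    destruct (refl_cases (x - b + a)) as [[_ ->]|[[? _]|[? _]]]; (congruence || lia).
Qed.

End Reflection.

Section Conjugation.
Variables (n : Z) (w w' : Z -> Z).
Hypothesis w_w' : forall x, w (w' x) = x.
Hypothesis w'_w : forall x, w' (w x) = x.
Hypothesis w_add_mul : forall x k, w (x + k * n) = w x + k * n.

Lemma inverse_add_mul x k : w' (x + k * n) = w' x + k * n.
Proof. rewrite <- (w_w' x) at 1. now rewrite <- w_add_mul, w'_w. Qed.

Lemma refl_conj a b x : a mod n <> b mod n ->
  w (refl n a b (w' x)) = refl n (w a) (w b) x.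
Proof.
  intros Hab.
  assert (Hinj : forall z z', w z mod n = w z' mod n -> z mod n = z' mod n).
  { intros z z' E. rewrite <- (w'_w z), <- (w'_w z').
    exact (mod_compat_of_add_mul n w' inverse_add_mul _ _ E). }
  assert (Hwab : w a mod n <> w b mod n) by (intros E; now apply Hab, Hinj).
  rewrite <- (w_w' x) at 2. set (z := w' x).
  destruct (refl_cases n a b z) as [[Hz ->]|[[Hz ->]|[Hza [Hzb ->]]]].
  - apply Z.cong_iff_ex in Hz as [k Hk].
    replace z with (a + k * n) by lia. replace (a + k * n - a + b) with (b + k * n) by lia.
    rewrite !w_add_mul. unfold refl. rewrite Z_mod_plus_full.
    destruct (Z.eq_dec (w a mod n) (w a mod n)); [lia|easy].
  - apply Z.cong_iff_ex in Hz as [k Hk].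
    replace z with (b + k * n) by lia. replace (b + k * n - b + a) with (a + k * n) by lia.
    rewrite !w_add_mul. unfold refl. rewrite Z_mod_plus_full.
    destruct (Z.eq_dec (w b mod n) (w a mod n)); [congruence|].
    destruct (Z.eq_dec (w b mod n) (w b mod n)); [lia|easy].
  - unfold refl. destruct (Z.eq_dec (w z mod n) (w a mod n)) as [E|]; [now apply Hinj in E|].
    destruct (Z.eq_dec (w z mod n) (w b mod n)) as [E|]; [now apply Hinj in E|easy].
Qed.

End Conjugation.

Lemma StronglySorted_cons_iff {A} (R : A -> A -> Prop) x l :
  StronglySorted R (x :: l) <-> StronglySorted R l /\ forall z, In z l -> R x z.
Proof.
  split.
  - intros [H1 H2]%StronglySorted_inv. now rewrite Forall_forall in H2.
  - intros [H1 H2]. constructor; [easy|]. now apply Forall_forall.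
Qed.

Lemma StronglySorted_app_iff {A} (R : A -> A -> Prop) l1 l2 :
  StronglySorted R (l1 ++ l2) <->
  StronglySorted R l1 /\ StronglySorted R l2 /\ forall x z, In x l1 -> In z l2 -> R x z.
Proof.
  induction l1 as [|x l1 IH]; cbn.
  - split; [|tauto]. intros H. repeat split; [constructor|easy|easy].
  - rewrite !StronglySorted_cons_iff, IH. setoid_rewrite in_app_iff. split.
    + intros [[H1 [H2 H3]] H4]. repeat split; auto. intros a b [<-|Ha] Hb; auto.
    + intros [[H1 H2] [H3 H4]]. repeat split; auto. intros b [Hb|Hb]; auto.
Qed.

Lemma StronglySorted_map_iff {A B} (R : A -> A -> Prop) (S : B -> B -> Prop) (g : A -> B) l :
  (forall x z, In x l -> In z l -> R x z <-> S (g x) (g z)) ->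
  StronglySorted S (map g l) <-> StronglySorted R l.
Proof.
  induction l as [|x l IH]; cbn; intros Hg; [split; constructor|].
  rewrite !StronglySorted_cons_iff, IH by auto. split; intros [H1 H2]; split; auto.
  - intros z Hz. apply Hg; auto. apply H2, in_map, Hz.
  - intros z' [z [<- Hz]]%in_map_iff. apply Hg; auto.
Qed.

Lemma Sorted_lt_iff_strongly l : Sorted Z.lt l <-> StronglySorted Z.lt l.
Proof.
  split; [apply Sorted_StronglySorted; intros ? ? ?; lia|apply StronglySorted_Sorted].
Qed.

Section Rotation.
Variables n k : Z.
Hypothesis k_range : 1 <= k < n.

Let shift x := (x - k) mod n.
Let off_k x := 1 <= x <= n /\ x <> k.

Lemma shift_cases x : off_k x ->
  k < x <= n /\ shift x = x - k \/ 1 <= x < k /\ shift x = x - k + n.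
Proof.
  intros Hx. unfold shift, off_k in *. destruct (Z.lt_ge_cases k x); [left|right].
  - split; [lia|]. apply Z.mod_small. lia.
  - split; [lia|]. rewrite <- (Z_mod_plus_full (x - k) 1 n), Z.mod_small; lia.
Qed.

Lemma split_above_below d : (forall x, In x d -> off_k x) ->
  StronglySorted Z.lt (map shift d) ->
  exists A B, d = A ++ B /\ (forall x, In x A -> k < x) /\ (forall x, In x B -> x < k).
Proof.
  induction d as [|x d IH]; intros Hd Hs.
  - exists [], []. now repeat split.
  - cbn in Hs. rewrite StronglySorted_cons_iff in Hs. destruct Hs as [Hs Hx].
    destruct (IH (fun z Hz => Hd z (or_intror Hz)) Hs) as [A [B [-> [HA HB]]]].
    destruct (shift_cases x (Hd x (or_introl eq_refl))) as [[Hxk Ex]|[Hxk Ex]].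
    + exists (x :: A), B. repeat split; auto. intros a [<-|Ha]; [lia|auto].
    + exists [], (x :: A ++ B). repeat split; [easy|].
      intros z [<-|Hz]; [easy|]. specialize (Hx _ (in_map shift _ _ Hz)).
      destruct (shift_cases z (Hd z (or_intror Hz))); lia.
Qed.

Lemma sorted_shift_one_side l : (forall x, In x l -> off_k x) ->
  (forall x, In x l -> k < x) \/ (forall x, In x l -> x < k) ->
  StronglySorted Z.lt (map shift l) <-> StronglySorted Z.lt l.
Proof.
  intros Hl Hside. apply StronglySorted_map_iff. intros x z Hx Hz.
  destruct (shift_cases x (Hl x Hx)), (shift_cases z (Hl z Hz)), Hside as [Hs|Hs];
    pose proof (Hs x Hx); pose proof (Hs z Hz); lia.
Qed.

Lemma rotation_sorted_iff d : (forall x, In x d -> off_k x) ->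
  (exists j, (j <= length d)%nat /\ Sorted Z.lt (skipn j d ++ [k] ++ firstn j d)) <->
  Sorted Z.lt (map shift d).
Proof.
  intros Hd. rewrite Sorted_lt_iff_strongly. split.
  - intros [j [_ Hs]]. rewrite Sorted_lt_iff_strongly in Hs.
    rewrite <- (firstn_skipn j d) in Hd |- *.
    set (A := firstn j d) in *. set (B := skipn j d) in *.
    assert (HdA : forall x, In x A -> off_k x) by (intros; apply Hd, in_app_iff; auto).
    assert (HdB : forall x, In x B -> off_k x) by (intros; apply Hd, in_app_iff; auto).
    cbn in Hs. rewrite StronglySorted_app_iff, StronglySorted_cons_iff in Hs.
    destruct Hs as [HB [[HA HkA] HBA]].
    assert (HBk : forall z, In z B -> z < k) by (intros; apply HBA; cbn; auto).
    rewrite map_app, StronglySorted_app_iff, !sorted_shift_one_side; auto.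
    repeat split; [easy|easy|].
    intros x' z' [x [<- Hx]]%in_map_iff [z [<- Hz]]%in_map_iff.
    destruct (shift_cases x (HdA x Hx)), (shift_cases z (HdB z Hz));
      pose proof (HkA x Hx); pose proof (HBk z Hz); lia.
  - intros Hs. destruct (split_above_below d Hd Hs) as [A [B [-> [HA HB]]]].
    assert (HdA : forall x, In x A -> off_k x) by (intros; apply Hd, in_app_iff; auto).
    assert (HdB : forall x, In x B -> off_k x) by (intros; apply Hd, in_app_iff; auto).
    exists (length A). split; [rewrite length_app; lia|].
    rewrite skipn_app, firstn_app, skipn_all2, firstn_all2, Nat.sub_diag by lia.
    cbn. rewrite app_nil_r, Sorted_lt_iff_strongly.
    rewrite map_app, StronglySorted_app_iff, !sorted_shift_one_side in Hs; auto.
    rewrite StronglySorted_app_iff, StronglySorted_cons_iff.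
    repeat split; try easy. intros x z Hx [<-|Hz]; auto.
    pose proof (HA z Hz). pose proof (HB x Hx). lia.
Qed.

Lemma cyc_cond_iff c : c <> [] -> (forall x, In x c -> off_k x) ->
  cyc_cond c k <-> Sorted Z.lt (map shift (removelast c)).
Proof.
  intros Hc Hx. pose proof (app_removelast_last 0 Hc) as Ec.
  set (d := removelast c) in *.
  rewrite <- rotation_sorted_iff.
  2:{ intros x Hx'. apply Hx. rewrite Ec. apply in_app_iff. auto. }
  assert (Hlen : length c = S (length d)) by (rewrite Ec, length_app; cbn; lia).
  assert (Hfirst : forall j, (j <= length d)%nat -> firstn j c = firstn j d).
  { intros j Hj. rewrite Ec, firstn_app. replace (j - length d)%nat with 0%nat by lia.
    apply app_nil_r. }
  unfold cyc_cond. fold d. split.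
  - intros [j [Hj H]]. exists (j - 1)%nat. split; [lia|]. now rewrite <- Hfirst by lia.
  - intros [j [Hj H]]. exists (S j). split; [lia|]. cbn. rewrite Nat.sub_0_r, Hfirst; auto.
Qed.

End Rotation.

Lemma filter_seq_cons (P : nat -> bool) a m t l : filter P (seq a m) = t :: l ->
  P t = true /\ (a <= t < a + m)%nat /\ (forall s, (a <= s < t)%nat -> P s = false) /\
  (forall s, In s l -> (t < s)%nat).
Proof.
  revert a. induction m as [|m IH]; intros a H; cbn in H; [discriminate|].
  destruct (P a) eqn:Pa.
  - injection H as <- <-. repeat split; [easy|lia|lia|lia|].
    intros s [Hs _]%filter_In. apply in_seq in Hs. lia.
  - apply IH in H as [H1 [H2 [H3 H4]]]. repeat split; auto; try lia.
    intros s Hs. destruct (Nat.eq_dec s a) as [->|]; [easy|]. apply H3. lia.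
Qed.

Lemma sorted_map_filter_seq (P : nat -> bool) (g : nat -> Z) a m :
  Sorted Z.lt (map g (filter P (seq a m))) <->
  (forall i i', (a <= i < i' /\ i' < a + m)%nat -> P i = true -> P i' = true ->
     (forall t, (i < t < i')%nat -> P t = false) -> g i < g i').
Proof.
  revert a. induction m as [|m IH]; intros a; cbn; [split; [lia|constructor]|].
  destruct (P a) eqn:Pa; cbn.
  - split.
    + intros H i i' Hi Pi Pi' Hgap. inversion H as [|? ? Hs Hhd]; subst.
      destruct (Nat.eq_dec i a) as [->|]; [|apply (proj1 (IH (S a)) Hs); auto; lia].
      destruct (filter P (seq (S a) m)) as [|f rest] eqn:E.
      * assert (Hin : In i' (filter P (seq (S a) m))).
        { apply filter_In. split; [apply in_seq; lia|easy]. }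
        now rewrite E in Hin.
      * apply filter_seq_cons in E as [Pf [Hf [Hbf _]]].
        assert (f = i') as <-.
        { destruct (Nat.lt_total f i') as [|[|]]; [|easy|].
          - specialize (Hgap f ltac:(lia)). congruence.
          - specialize (Hbf i' ltac:(lia)). congruence. }
        now inversion Hhd.
    + intros H. constructor.
      * apply IH. intros i i' Hi Pi Pi' Hgap. apply H; auto. lia.
      * destruct (filter P (seq (S a) m)) as [|f rest] eqn:E; constructor.
        apply filter_seq_cons in E as [Pf [Hf [Hbf _]]].
        apply H; [lia|easy|easy|]. intros t Ht. apply Hbf. lia.
  - rewrite IH. split; intros H i i' Hi Pi Pi' Hgap.
    + destruct (Nat.eq_dec i a) as [->|]; [congruence|]. apply H; auto. lia.
    + apply H; auto. lia.
Qed.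

Lemma map_removelast {A B} (g : A -> B) l : removelast (map g l) = map g (removelast l).
Proof.
  induction l as [|a [|b l] IH]; [easy|easy|]. cbn in IH |- *. now rewrite IH.
Qed.

Lemma length_filter_unique {A} (P : A -> bool) l x : NoDup l -> In x l -> P x = true ->
  (forall z, In z l -> P z = true -> z = x) -> length (filter P l) = 1%nat.
Proof.
  induction l as [|a l IH]; intros Hnd Hin Px Hu; [easy|].
  apply NoDup_cons_iff in Hnd as [Ha Hnd]. cbn. destruct Hin as [<-|Hin].
  - rewrite Px. cbn. f_equal. apply length_zero_iff_nil.
    destruct (filter P l) as [|b l'] eqn:E; [easy|].
    assert (Hb : In b (filter P l)) by (rewrite E; now left).
    apply filter_In in Hb as [Hb Pb]. rewrite (Hu b (or_intror Hb) Pb) in Hb. easy.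
  - destruct (P a) eqn:Pa.
    + rewrite (Hu a (or_introl eq_refl) Pa) in Ha. easy.
    + apply IH; auto. intros z Hz Pz. apply Hu; auto. now right.
Qed.

Lemma list_sum_map_add {A} (f g : A -> nat) l :
  list_sum (map (fun x => f x + g x)%nat l) = (list_sum (map f l) + list_sum (map g l))%nat.
Proof. unfold list_sum. induction l as [|a l IH]; cbn; [easy|]. rewrite IH. lia. Qed.

Lemma list_sum_indicator {A} (P : A -> bool) l :
  list_sum (map (fun x => if P x then 1%nat else 0%nat) l) = length (filter P l).
Proof. unfold list_sum. induction l as [|a l IH]; cbn; [easy|]. destruct (P a); cbn; auto. Qed.

Lemma list_sum_lower_bound c l : (forall x, In x l -> c <= x)%nat ->
  (c * length l <= list_sum l)%nat.
Proof.
  unfold list_sum. induction l as [|a l IH]; cbn; intros H; [lia|].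
  pose proof (H a (or_introl eq_refl)). specialize (IH (fun x Hx => H x (or_intror Hx))). lia.
Qed.

Lemma list_sum_lower_bound_eq c l : (forall x, In x l -> c <= x)%nat ->
  list_sum l = (c * length l)%nat -> forall x, In x l -> x = c.
Proof.
  induction l as [|a l IH]; intros H Hsum x Hx; [easy|].
  change (list_sum (a :: l)) with (a + list_sum l)%nat in Hsum. cbn [length] in Hsum.
  pose proof (list_sum_lower_bound c l (fun z Hz => H z (or_intror Hz))).
  pose proof (H a (or_introl eq_refl)).
  destruct Hx as [<-|Hx]; [lia|]. apply IH; [intros; apply H; now right|lia|easy].
Qed.

Definition list_sumZ (l : list Z) : Z := fold_right Z.add 0 l.

Lemma list_sumZ_app l1 l2 : list_sumZ (l1 ++ l2) = list_sumZ l1 + list_sumZ l2.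
Proof. unfold list_sumZ. induction l1 as [|a l1 IH]; cbn; [easy|]. lia. Qed.

Lemma modn1_range n x : 0 < n -> 1 <= modn1 n x <= n.
Proof. intros Hn. unfold modn1. pose proof (Z.mod_pos_bound (x - 1) n Hn). lia. Qed.

Lemma modn1_mod n x : 0 < n -> modn1 n x mod n = x mod n.
Proof.
  intros Hn. unfold modn1. apply Z.cong_iff_ex. exists (- ((x - 1) / n)).
  pose proof (Z.div_mod (x - 1) n ltac:(lia)). lia.
Qed.

Section Path.
Variables (n : Z) (N : nat) (y : nat -> Z).
Hypothesis n_ge2 : 2 <= n.
Hypothesis N_eq : Z.of_nat N = 2 * n - 2.
Hypothesis y_lt_succ : forall i, (i < N)%nat -> y i < y (S i).
Hypothesis y_ncong_succ : forall i, (i < N)%nat -> y i mod n <> y (S i) mod n.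

Fixpoint prefix_prod (j : nat) (x : Z) : Z :=
  match j with O => x | S i => prefix_prod i (refl n (y i) (y j) x) end.

Fixpoint prefix_inv (j : nat) (x : Z) : Z :=
  match j with O => x | S i => refl n (y i) (y j) (prefix_inv i x) end.

Hypothesis prefix_prod_N : forall x, prefix_prod N x = lambda n x.

Lemma prefix_prod_add_mul j x k : prefix_prod j (x + k * n) = prefix_prod j x + k * n.
Proof. revert x. induction j as [|j IH]; intros x; cbn; [easy|]. now rewrite refl_add_mul. Qed.

Lemma prefix_inv_add_mul j x k : prefix_inv j (x + k * n) = prefix_inv j x + k * n.
Proof. induction j as [|j IH]; cbn; [easy|]. now rewrite IH, refl_add_mul. Qed.

Lemma prefix_prod_mod_inj j x x' :
  prefix_prod j x mod n = prefix_prod j x' mod n -> x mod n = x' mod n.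
Proof.
  revert x x'. induction j as [|j IH]; cbn; intros x x' H; [easy|].
  apply IH in H. exact (refl_mod_inj _ _ _ _ _ H).
Qed.

Lemma prefix_inv_mod_inj j x x' :
  prefix_inv j x mod n = prefix_inv j x' mod n -> x mod n = x' mod n.
Proof.
  revert x x'. induction j as [|j IH]; cbn; intros x x' H; [easy|].
  apply IH. exact (refl_mod_inj _ _ _ _ _ H).
Qed.

Lemma prefix_prod_inv j x : (j <= N)%nat -> prefix_prod j (prefix_inv j x) = x.
Proof.
  revert x. induction j as [|j IH]; intros x Hj; cbn; [easy|].
  rewrite refl_involutive; [apply IH; lia|]. apply y_ncong_succ. lia.
Qed.

Lemma prefix_inv_prod j x : (j <= N)%nat -> prefix_inv j (prefix_prod j x) = x.
Proof.
  revert x. induction j as [|j IH]; intros x Hj; cbn; [easy|].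
  rewrite IH by lia. apply refl_involutive, y_ncong_succ. lia.
Qed.

Lemma refl_at_right i : (i < N)%nat -> refl n (y i) (y (S i)) (y (S i)) = y i.
Proof.
  intros Hi. pose proof (y_ncong_succ i Hi).
  destruct (refl_cases n (y i) (y (S i)) (y (S i))) as [[? _]|[[_ ->]|[_ [? _]]]];
    [congruence|lia|congruence].
Qed.

Lemma refl_at_left i : (i < N)%nat -> refl n (y i) (y (S i)) (y i) = y (S i).
Proof.
  intros Hi. pose proof (y_ncong_succ i Hi).
  destruct (refl_cases n (y i) (y (S i)) (y i)) as [[_ ->]|[[? _]|[? _]]];
    [lia|congruence|congruence].
Qed.

Lemma prefix_prod_y j : (j <= N)%nat -> prefix_prod j (y j) = y 0%nat.
Proof. induction j as [|j IH]; intros Hj; cbn; [easy|]. rewrite refl_at_right; [apply IH|]; lia. Qed.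

Lemma prefix_inv_y0 j : (j <= N)%nat -> prefix_inv j (y 0%nat) = y j.
Proof. induction j as [|j IH]; intros Hj; cbn; [easy|]. rewrite IH, refl_at_left; lia. Qed.

Lemma y_increasing i j : (i < j <= N)%nat -> y i < y j.
Proof.
  intros [Hij HjN]. induction Hij as [|j Hij IH]; [apply y_lt_succ; lia|].
  specialize (IH ltac:(lia)). specialize (y_lt_succ j ltac:(lia)). lia.
Qed.

(* lambda_n lowers x only when n divides x, and it sends y_N to y_0 < y_N. *)
Lemma y0_mod : y 0%nat mod n = 0.
Proof.
  pose proof (prefix_prod_y N (le_n _)) as H. rewrite prefix_prod_N in H. unfold lambda in H.
  pose proof (y_increasing 0 N ltac:(lia)).
  destruct (Z.eqb_spec (y N mod n) 0) as [HN|]; [|lia].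
  rewrite <- H, <- HN. apply Z.cong_iff_ex. exists (- (n - 1)). lia.
Qed.

(* The residues 1, ..., n-1 are the non-root vertices of the tree; [prefix_inv t v] follows
   the token [v] through the first [t] reflections. *)
Definition token (v : Z) : Prop := 0 < v < n.
Definition gap (t : nat) : Z := y t - y (t - 1).
Definition moves (v : Z) (t : nat) : bool := prefix_inv (t - 1) v mod n =? y t mod n.
Definition move_steps (v : Z) (j : nat) : list nat := filter (moves v) (seq 1 j).

Lemma token_mod v : token v -> v mod n = v.
Proof. intros Hv. apply Z.mod_small. unfold token in Hv. lia. Qed.

Lemma gap_succ i : gap (S i) = y (S i) - y i.
Proof. unfold gap. cbn. now rewrite Nat.sub_0_r. Qed.

Lemma gap_pos t : (1 <= t <= N)%nat -> 0 < gap t.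
Proof. intros Ht. destruct t as [|i]; [lia|]. rewrite gap_succ. specialize (y_lt_succ i). lia. Qed.

Lemma gap_neq_n t : (1 <= t <= N)%nat -> gap t <> n.
Proof.
  intros Ht E. destruct t as [|i]; [lia|]. rewrite gap_succ in E.
  apply (y_ncong_succ i); [lia|]. apply Z.cong_iff_ex. exists (-1). lia.
Qed.

Lemma token_off_walk v t : token v -> (t <= N)%nat -> prefix_inv t v mod n <> y t mod n.
Proof.
  intros Hv Ht E. rewrite <- (prefix_inv_y0 t Ht) in E. apply prefix_inv_mod_inj in E.
  rewrite token_mod, y0_mod in E by easy. unfold token in Hv. lia.
Qed.

Lemma prefix_inv_succ v i : token v -> (i < N)%nat ->
  prefix_inv (S i) v = if moves v (S i) then prefix_inv i v - gap (S i) else prefix_inv i v.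
Proof.
  intros Hv Hi. unfold moves. cbn [prefix_inv]. rewrite gap_succ, Nat.sub_succ, Nat.sub_0_r.
  destruct (refl_cases n (y i) (y (S i)) (prefix_inv i v)) as [[H1 _]|[[H1 ->]|[_ [H2 ->]]]].
  - exfalso. apply (token_off_walk v i); auto; lia.
  - rewrite H1, Z.eqb_refl. lia.
  - now destruct (Z.eqb_spec (prefix_inv i v mod n) (y (S i) mod n)).
Qed.

Lemma prefix_inv_move_steps v j : token v -> (j <= N)%nat ->
  prefix_inv j v = v - list_sumZ (map gap (move_steps v j)).
Proof.
  intros Hv. induction j as [|j IH]; intros Hj; [cbn; lia|].
  rewrite prefix_inv_succ by (auto; lia).
  unfold move_steps. rewrite seq_S, filter_app, map_app, list_sumZ_app.
  fold (move_steps v j). rewrite IH by lia. cbn.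
  destruct (moves v (S j)); cbn; lia.
Qed.

Lemma prefix_inv_N v : token v -> prefix_inv N v = v - n.
Proof.
  intros Hv. rewrite <- (prefix_inv_prod N (v - n)) by lia. f_equal.
  rewrite prefix_prod_N. unfold lambda.
  replace (v - n) with (v + (-1) * n) at 1 by lia. rewrite Z_mod_plus_full, token_mod by easy.
  destruct (Z.eqb_spec v 0); unfold token in Hv; lia.
Qed.

Lemma total_gap_moves v : token v -> list_sumZ (map gap (move_steps v N)) = n.
Proof.
  intros Hv. pose proof (prefix_inv_move_steps v N Hv (le_n _)).
  rewrite prefix_inv_N in H by easy. lia.
Qed.

Lemma in_move_steps v t j : In t (move_steps v j) <-> (1 <= t <= j)%nat /\ moves v t = true.
Proof. unfold move_steps. rewrite filter_In, in_seq. intuition lia. Qed.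

Definition tokens : list Z := map Z.of_nat (seq 1 (Z.to_nat (n - 1))).

Lemma in_tokens v : In v tokens <-> token v.
Proof.
  unfold tokens, token. rewrite in_map_iff. split.
  - intros [x [<- Hx]]. apply in_seq in Hx. lia.
  - intros H. exists (Z.to_nat v). rewrite in_seq. lia.
Qed.

Lemma tokens_NoDup : NoDup tokens.
Proof. apply NoDup_map_NoDup_ForallPairs; [intros a b _ _; lia|]. apply seq_NoDup. Qed.

Lemma length_tokens : length tokens = Z.to_nat (n - 1).
Proof. unfold tokens. now rewrite length_map, length_seq. Qed.

Definition moved_token (t : nat) : Z := prefix_prod (t - 1) (y t) mod n.

Lemma moved_token_spec t : (1 <= t <= N)%nat ->
  token (moved_token t) /\ moves (moved_token t) t = true.
Proof.
  intros Ht. unfold token, moves, moved_token. split.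
  - pose proof (Z.mod_pos_bound (prefix_prod (t - 1) (y t)) n ltac:(lia)).
    split; [|lia]. destruct (Z.eq_dec (prefix_prod (t - 1) (y t) mod n) 0) as [E|]; [|lia].
    rewrite <- y0_mod, <- (prefix_prod_y (t - 1)) in E by lia.
    apply prefix_prod_mod_inj in E. destruct t as [|i]; [lia|].
    cbn in E. rewrite Nat.sub_0_r in E. now destruct (y_ncong_succ i ltac:(lia)).
  - apply Z.eqb_eq.
    rewrite (mod_compat_of_add_mul n _ (prefix_inv_add_mul (t - 1)) _ (prefix_prod (t - 1) (y t))).
    + now rewrite prefix_inv_prod by lia.
    + apply Z.mod_mod. lia.
Qed.

Lemma moved_token_unique v t : token v -> (1 <= t <= N)%nat -> moves v t = true ->
  v = moved_token t.
Proof.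
  intros Hv Ht H.
  apply Z.eqb_eq, (mod_compat_of_add_mul n _ (prefix_prod_add_mul (t - 1))) in H.
  rewrite prefix_prod_inv in H by lia. unfold moved_token. now rewrite <- H, token_mod.
Qed.

Lemma count_moves j : (j <= N)%nat ->
  list_sum (map (fun v => length (move_steps v j)) tokens) = j.
Proof.
  induction j as [|j IH]; intros Hj.
  - unfold move_steps. cbn. now induction tokens.
  - transitivity (list_sum (map (fun v => length (move_steps v j) +
                                 if moves v (S j) then 1 else 0)%nat tokens)).
    + f_equal. apply map_ext. intros v. unfold move_steps.
      rewrite seq_S, filter_app, length_app. cbn. now destruct (moves v (S j)).
    + rewrite list_sum_map_add, IH, list_sum_indicator by lia.
      destruct (moved_token_spec (S j)) as [Hv Hm]; [lia|].
      rewrite (length_filter_unique _ _ (moved_token (S j))); auto.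
      * lia.
      * apply tokens_NoDup.
      * now apply in_tokens.
      * intros v Hv' Hm'. apply moved_token_unique; auto; [now apply in_tokens|lia].
Qed.

Lemma moves_at_least_twice v : token v -> (2 <= length (move_steps v N))%nat.
Proof.
  intros Hv. pose proof (total_gap_moves v Hv) as Hsum.
  destruct (move_steps v N) as [|t [|t' l]] eqn:E; cbn in Hsum |- *; [lia| |lia].
  assert (Ht : In t (move_steps v N)) by (rewrite E; now left).
  apply in_move_steps in Ht as [Ht _]. exfalso. apply (gap_neq_n t Ht). lia.
Qed.

(* Every token moves at least twice, and the 2n-2 steps each move exactly one of the n-1
   tokens. *)
Lemma moves_exactly_twice v : token v -> length (move_steps v N) = 2%nat.
Proof.
  intros Hv. apply (list_sum_lower_bound_eq 2 (map (fun v => length (move_steps v N)) tokens)).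
  - intros x [w [<- Hw]]%in_map_iff. apply moves_at_least_twice, in_tokens, Hw.
  - rewrite count_moves, length_map, length_tokens; lia.
  - apply in_map_iff. exists v. split; [easy|]. now apply in_tokens.
Qed.

(* The walk [y] mod [n] enters [v] at step [enter v] and returns to the parent of [v] at step
   [leave v]. *)
Definition enter (v : Z) : nat := hd 0%nat (move_steps v N).
Definition leave (v : Z) : nat := hd 0%nat (tl (move_steps v N)).

Lemma move_steps_N v : token v -> move_steps v N = [enter v; leave v].
Proof.
  intros Hv. pose proof (moves_exactly_twice v Hv). unfold enter, leave.
  destruct (move_steps v N) as [|a [|b [|c l]]]; cbn in *; easy || lia.
Qed.

Lemma enter_lt_leave v : token v -> (1 <= enter v /\ enter v < leave v /\ leave v <= N)%nat.
Proof.
  intros Hv. pose proof (move_steps_N v Hv) as E.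
  assert (Hq : In (leave v) (move_steps v N)) by (rewrite E; right; now left).
  apply in_move_steps in Hq.
  unfold move_steps in E. apply filter_seq_cons in E as [_ [H1 [_ H2]]].
  specialize (H2 (leave v) (or_introl eq_refl)). lia.
Qed.

Lemma moves_iff v t : token v -> (1 <= t <= N)%nat ->
  moves v t = true <-> t = enter v \/ t = leave v.
Proof.
  intros Hv Ht. pose proof (in_move_steps v t N) as H.
  rewrite move_steps_N in H by easy. cbn in H.
  split; intros Hm; [destruct (proj2 H (conj Ht Hm)); intuition|apply H; lia].
Qed.

Lemma gap_enter_leave v : token v -> gap (enter v) + gap (leave v) = n.
Proof.
  intros Hv. pose proof (total_gap_moves v Hv) as H.
  rewrite move_steps_N in H by easy. cbn in H. lia.
Qed.

Lemma prefix_inv_token v j : token v -> (j <= N)%nat ->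
  prefix_inv j v =
  if (j <? enter v)%nat then v else if (j <? leave v)%nat then v - gap (enter v) else v - n.
Proof.
  intros Hv. pose proof (enter_lt_leave v Hv). pose proof (gap_enter_leave v Hv).
  induction j as [|j IH]; intros Hj.
  - cbn [prefix_inv]. destruct (Nat.ltb_spec 0 (enter v)); lia.
  - rewrite prefix_inv_succ, IH by (auto; lia).
    destruct (moves v (S j)) eqn:Hm.
    + apply moves_iff in Hm; [|easy|lia]. destruct Hm as [E|E]; rewrite <- E in *;
      repeat match goal with |- context [Nat.ltb ?a ?b] => destruct (Nat.ltb_spec a b) end; lia.
    + assert (S j <> enter v /\ S j <> leave v) as [].
      { split; intros E; enough (moves v (S j) = true) by congruence;
          apply moves_iff; auto; lia. }
      repeat match goal with |- context [Nat.ltb ?a ?b] => destruct (Nat.ltb_spec a b) end; lia.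
Qed.

Lemma moves_mod v t : moves v t = true -> prefix_inv (t - 1) v mod n = y t mod n.
Proof. now intros ?%Z.eqb_eq. Qed.

Lemma y_enter v : token v -> y (enter v) mod n = v.
Proof.
  intros Hv. pose proof (enter_lt_leave v Hv).
  assert (Hm : moves v (enter v) = true) by (apply moves_iff; auto; lia).
  apply moves_mod in Hm. rewrite prefix_inv_token in Hm by (auto; lia).
  destruct (Nat.ltb_spec (enter v - 1) (enter v)); [|lia]. now rewrite token_mod in Hm.
Qed.

Lemma y_pred_enter v : token v -> y (enter v - 1) mod n = (v - gap (enter v)) mod n.
Proof.
  intros Hv. unfold gap. symmetry.
  replace (v - (y (enter v) - y (enter v - 1))) with (v - y (enter v) + y (enter v - 1)) by lia.
  apply mod_translate. now rewrite y_enter, token_mod.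
Qed.

Lemma y_leave v : token v -> y (leave v) mod n = y (enter v - 1) mod n.
Proof.
  intros Hv. pose proof (enter_lt_leave v Hv).
  assert (Hm : moves v (leave v) = true) by (apply moves_iff; auto; lia).
  apply moves_mod in Hm. rewrite prefix_inv_token in Hm by (auto; lia).
  destruct (Nat.ltb_spec (leave v - 1) (enter v)); [lia|].
  destruct (Nat.ltb_spec (leave v - 1) (leave v)); [|lia].
  now rewrite <- Hm, y_pred_enter.
Qed.

Lemma y_pred_leave v : token v -> y (leave v - 1) mod n = v.
Proof.
  intros Hv. rewrite <- (token_mod v Hv) at 2.
  pose proof (y_leave v Hv) as [a Ha]%Z.cong_iff_ex.
  pose proof (y_pred_enter v Hv) as [b Hb]%Z.cong_iff_ex.
  pose proof (gap_enter_leave v Hv). unfold gap in *.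
  apply Z.cong_iff_ex. exists (a + b - 1). nia.
Qed.

Lemma y_outside_visit v t : token v -> (t <= N)%nat -> (t < enter v \/ leave v <= t)%nat ->
  y t mod n <> v.
Proof.
  intros Hv Ht Hout E. apply (token_off_walk v t Hv Ht). rewrite E, prefix_inv_token by easy.
  destruct (Nat.ltb_spec t (enter v)); [now apply token_mod|].
  destruct (Nat.ltb_spec t (leave v)); [lia|].
  rewrite <- (token_mod v Hv) at 2. replace (v - n) with (v + (-1) * n) by lia.
  apply Z_mod_plus_full.
Qed.

Lemma y_inside_visit v t : token v -> (enter v <= t < leave v)%nat ->
  y t mod n <> y (enter v - 1) mod n.
Proof.
  intros Hv Ht E. pose proof (enter_lt_leave v Hv). apply (token_off_walk v t Hv ltac:(lia)).
  rewrite E, prefix_inv_token, y_pred_enter by (auto; lia).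
  destruct (Nat.ltb_spec t (enter v)); [lia|].
  destruct (Nat.ltb_spec t (leave v)); [easy|lia].
Qed.

Lemma moved_token_enter_or_leave t : (1 <= t <= N)%nat ->
  t = enter (moved_token t) \/ t = leave (moved_token t).
Proof. intros Ht. destruct (moved_token_spec t Ht). now apply moves_iff. Qed.

Lemma moved_token_enter v : token v -> moved_token (enter v) = v.
Proof.
  intros Hv. pose proof (enter_lt_leave v Hv). symmetry.
  apply moved_token_unique; [easy|lia|]. apply moves_iff; auto; lia.
Qed.

Lemma moved_token_leave v : token v -> moved_token (leave v) = v.
Proof.
  intros Hv. pose proof (enter_lt_leave v Hv). symmetry.
  apply moved_token_unique; [easy|lia|]. apply moves_iff; auto; lia.
Qed.

Lemma gap_lt_n t : (1 <= t <= N)%nat -> 0 < gap t < n.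
Proof.
  intros Ht. destruct (moved_token_spec t Ht) as [Hv _].
  pose proof (enter_lt_leave _ Hv). pose proof (gap_enter_leave _ Hv).
  pose proof (gap_pos (enter (moved_token t)) ltac:(lia)).
  pose proof (gap_pos (leave (moved_token t)) ltac:(lia)).
  destruct (moved_token_enter_or_leave t Ht) as [E|E]; rewrite E; lia.
Qed.

Definition mval_path (t : nat) : Z := prefix_prod (t - 1) (y t) - y 0%nat.

Lemma mval_path_moved_token t : (1 <= t <= N)%nat ->
  mval_path t = y t - y 0%nat + (moved_token t - prefix_inv (t - 1) (moved_token t)).
Proof.
  intros Ht. destruct (moved_token_spec t Ht) as [_ Hm].
  apply moves_mod in Hm. symmetry in Hm. apply Z.cong_iff_ex in Hm as [k Hk].
  unfold mval_path. replace (y t) with (prefix_inv (t - 1) (moved_token t) + k * n) at 1 by lia.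
  rewrite prefix_prod_add_mul, prefix_prod_inv by lia. lia.
Qed.

Lemma mval_enter v : token v -> mval_path (enter v) = y (enter v) - y 0%nat.
Proof.
  intros Hv. pose proof (enter_lt_leave v Hv).
  rewrite mval_path_moved_token, moved_token_enter, prefix_inv_token by (auto; lia).
  destruct (Nat.ltb_spec (enter v - 1) (enter v)); lia.
Qed.

Lemma mval_leave v : token v -> mval_path (leave v) = y (leave v) - y 0%nat + gap (enter v).
Proof.
  intros Hv. pose proof (enter_lt_leave v Hv).
  rewrite mval_path_moved_token, moved_token_leave, prefix_inv_token by (auto; lia).
  destruct (Nat.ltb_spec (leave v - 1) (enter v)); [lia|].
  destruct (Nat.ltb_spec (leave v - 1) (leave v)); lia.
Qed.

Lemma mval_path_cases t : (1 <= t <= N)%nat ->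
  mval_path t = y t - y 0%nat \/
  exists u, token u /\ t = leave u /\ mval_path t = y t - y 0%nat + gap (enter u).
Proof.
  intros Ht. destruct (moved_token_spec t Ht) as [Hv _].
  destruct (moved_token_enter_or_leave t Ht) as [E|E].
  - left. rewrite E at 1 2. now apply mval_enter.
  - right. exists (moved_token t). split; [easy|split; [easy|]].
    rewrite E at 1 2. now apply mval_leave.
Qed.

Definition sibling_gaps_increase : Prop :=
  forall j u w, (1 <= j < N)%nat -> token u -> token w ->
  j = leave u -> S j = enter w -> gap (enter u) < gap (S j).

Lemma mval_path_increasing_iff :
  (forall j, (1 <= j < N)%nat -> mval_path j < mval_path (S j)) <-> sibling_gaps_increase.
Proof.
  split.
  - intros H j u w Hj Hu Hw Eu Ew. specialize (H j Hj).
    rewrite Eu, mval_leave, <- Eu in H by easy. rewrite Ew, mval_enter, <- Ew in H by easy.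
    rewrite gap_succ. lia.
  - intros H j Hj. pose proof (gap_lt_n (S j) ltac:(lia)). rewrite gap_succ in *.
    destruct (mval_path_cases j ltac:(lia)) as [E1|[u [Hu [Eu E1]]]];
    destruct (mval_path_cases (S j) ltac:(lia)) as [E2|[w [Hw [Ew E2]]]];
    rewrite E1, E2.
    + lia.
    + pose proof (enter_lt_leave w Hw). pose proof (gap_pos (enter w) ltac:(lia)). lia.
    + destruct (moved_token_spec (S j) ltac:(lia)) as [Hw _].
      destruct (moved_token_enter_or_leave (S j) ltac:(lia)) as [Ew|Ew].
      * specialize (H j u _ Hj Hu Hw Eu Ew). rewrite gap_succ in H. lia.
      * exfalso. pose proof (mval_leave _ Hw) as M. rewrite <- Ew in M.
        pose proof (enter_lt_leave _ Hw). pose proof (gap_pos (enter (moved_token (S j))) ltac:(lia)).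
        lia.
    + pose proof (gap_enter_leave w Hw). pose proof (gap_enter_leave u Hu).
      pose proof (gap_lt_n j ltac:(lia)). rewrite <- Eu, <- Ew, gap_succ in *. lia.
Qed.

Definition starts_at (k : Z) (i : nat) : bool := (y (i - 1) - k) mod n =? 0.

Lemma starts_at_iff k i : starts_at k i = true <-> y (i - 1) mod n = k mod n.
Proof. unfold starts_at. now rewrite Z.eqb_eq, Z.cong_iff_0. Qed.

Lemma token_eq_of_mod k v : 1 <= k <= n -> token v -> k mod n = v -> k = v.
Proof.
  intros Hk Hv E. unfold token in Hv. destruct (Z.eq_dec k n) as [->|].
  - rewrite Z_mod_same_full in E. lia.
  - rewrite Z.mod_small in E; lia.
Qed.

(* The root of the tree is the vertex [n], for which [leave n] is meaningless. *)
Definition out_gaps_increase : Prop :=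
  forall k i i', 1 <= k <= n -> (1 <= i < i' /\ i' <= N)%nat ->
  starts_at k i = true -> starts_at k i' = true ->
  (forall t, (i < t < i')%nat -> starts_at k t = false) ->
  k = n \/ (i' < leave k)%nat -> gap i < gap i'.

Lemma sibling_of_out_gaps : out_gaps_increase -> sibling_gaps_increase.
Proof.
  intros H j u w Hj Hu Hw Eu Ew.
  pose proof (enter_lt_leave u Hu). pose proof (enter_lt_leave w Hw).
  set (k := if y j mod n =? 0 then n else y j mod n).
  assert (Hk : 1 <= k <= n /\ k mod n = y j mod n).
  { unfold k. pose proof (Z.mod_pos_bound (y j) n ltac:(lia)).
    destruct (Z.eqb_spec (y j mod n) 0) as [E|].
    - rewrite Z_mod_same_full. lia.
    - rewrite Z.mod_mod by lia. lia. }
  apply (H k (enter u) (S j)); [lia|lia| | | |].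
  - apply starts_at_iff. now rewrite (proj2 Hk), Eu, y_leave.
  - apply starts_at_iff. cbn. now rewrite Nat.sub_0_r, (proj2 Hk).
  - intros t Ht. destruct (starts_at k t) eqn:D; [exfalso|easy]. apply starts_at_iff in D.
    apply (y_inside_visit u (t - 1)); [easy|lia|]. now rewrite D, (proj2 Hk), Eu, y_leave.
  - unfold k. destruct (Z.eqb_spec (y j mod n) 0); [now left|right].
    assert (Hk2 : token (y j mod n)).
    { unfold token. pose proof (Z.mod_pos_bound (y j) n ltac:(lia)). lia. }
    assert (S j <= leave (y j mod n))%nat.
    { destruct (Nat.le_gt_cases (S j) (leave (y j mod n))); [easy|exfalso].
      now apply (y_outside_visit (y j mod n) j Hk2); [lia|lia|]. }
    destruct (Nat.eq_dec (S j) (leave (y j mod n))) as [E|]; [exfalso|lia].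
    pose proof (moved_token_leave _ Hk2) as Ml. rewrite <- E, Ew, moved_token_enter in Ml by easy.
    rewrite <- Ml in E. lia.
Qed.

Lemma out_gaps_of_sibling : sibling_gaps_increase -> out_gaps_increase.
Proof.
  intros H k i i' Hk Hii Di Di' Dbetween Hcond.
  destruct (moved_token_spec i ltac:(lia)) as [Hu _]. set (u := moved_token i) in *.
  pose proof (enter_lt_leave u Hu).
  apply starts_at_iff in Di, Di'.
  destruct (moved_token_enter_or_leave i ltac:(lia)) as [Ei|Ei]; fold u in Ei.
  - assert (Eu : leave u = (i' - 1)%nat).
    { destruct (Nat.lt_total (i' - 1) (leave u)) as [Hl|[He|Hg]]; [exfalso|easy|exfalso].
      - apply (y_inside_visit u (i' - 1)); [easy|lia|]. now rewrite Di', <- Ei, Di.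
      - specialize (Dbetween (S (leave u)) ltac:(lia)).
        enough (starts_at k (S (leave u)) = true) by congruence.
        apply starts_at_iff. cbn. now rewrite Nat.sub_0_r, y_leave, <- Ei, Di. }
    destruct (moved_token_spec i' ltac:(lia)) as [Hw _]. set (w := moved_token i') in *.
    pose proof (enter_lt_leave w Hw).
    destruct (moved_token_enter_or_leave i' ltac:(lia)) as [Ei'|Ei']; fold w in Ei'.
    + rewrite Ei. replace i' with (S (i' - 1)) by lia.
      apply (H (i' - 1)%nat u w); auto; lia.
    + exfalso. assert (k = w).
      { apply token_eq_of_mod; auto. rewrite <- Di', Ei' at 1. now apply y_pred_leave. }
      rewrite H2 in Hcond. unfold token in Hw. lia.
  - exfalso. assert (k = u).
    { apply token_eq_of_mod; auto. rewrite <- Di, Ei at 1. now apply y_pred_leave. }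
    subst k. apply (y_outside_visit u (i' - 1)); [easy|lia|lia|].
    now rewrite Di', token_mod.
Qed.

Definition children (k : Z) : list Z :=
  map (fun i => modn1 n (y i)) (filter (starts_at k) (seq 1 N)).

Lemma modn1_child k i : 1 <= k <= n -> (1 <= i <= N)%nat -> starts_at k i = true ->
  (modn1 n (y i) - k) mod n = gap i.
Proof.
  intros Hk Hi D. apply starts_at_iff in D as [a Ha]%Z.cong_iff_ex.
  pose proof (gap_lt_n i Hi). pose proof (modn1_mod n (y i) ltac:(lia)) as [b Hb]%Z.cong_iff_ex.
  rewrite <- (Z.mod_small (gap i) n) by lia. apply Z.cong_iff_ex.
  exists (b + a). unfold gap. lia.
Qed.

Lemma modn1_root_child i : (1 <= i <= N)%nat -> starts_at n i = true -> modn1 n (y i) = gap i.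
Proof.
  intros Hi D. pose proof (modn1_child n i ltac:(lia) Hi D) as E.
  pose proof (modn1_range n (y i) ltac:(lia)). pose proof (gap_lt_n i Hi).
  replace (modn1 n (y i) - n) with (modn1 n (y i) + (-1) * n) in E by lia.
  rewrite Z_mod_plus_full in E. rewrite <- E. destruct (Z.eq_dec (modn1 n (y i)) n) as [En|].
  - rewrite En, Z_mod_same_full in E. lia.
  - symmetry. apply Z.mod_small. lia.
Qed.

Lemma children_range k x : 1 <= k < n -> In x (children k) -> 1 <= x <= n /\ x <> k.
Proof.
  intros Hk Hx. unfold children in Hx. apply in_map_iff in Hx as [i [<- Hi]].
  apply filter_In in Hi as [Hi D]. apply in_seq in Hi.
  split; [apply modn1_range; lia|]. intros E. apply starts_at_iff in D.
  destruct i as [|i]; [lia|]. apply (y_ncong_succ i); [lia|].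
  cbn in D. rewrite Nat.sub_0_r in D. now rewrite D, <- E, modn1_mod by lia.
Qed.

Lemma starts_at_le_leave k t : token k -> (1 <= t <= N)%nat -> starts_at k t = true ->
  (t <= leave k)%nat.
Proof.
  intros Hk Ht D. apply starts_at_iff in D. rewrite (token_mod k Hk) in D.
  destruct (Nat.le_gt_cases t (leave k)); [easy|exfalso].
  apply (y_outside_visit k (t - 1) Hk); [lia|right; lia|easy].
Qed.

Lemma starts_at_leave k : token k -> starts_at k (leave k) = true.
Proof. intros Hk. apply starts_at_iff. now rewrite y_pred_leave, token_mod. Qed.

Lemma removelast_starts_at k : token k ->
  removelast (filter (starts_at k) (seq 1 N)) = filter (starts_at k) (seq 1 (leave k - 1)).
Proof.
  intros Hk. pose proof (enter_lt_leave k Hk).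
  replace N with ((leave k - 1) + S (N - leave k))%nat at 1 by lia.
  rewrite seq_app, filter_app. replace (1 + (leave k - 1))%nat with (leave k) by lia.
  rewrite <- cons_seq. cbn [filter]. rewrite starts_at_leave by easy.
  rewrite (filter_ext_in _ (fun _ => false) (seq (S (leave k)) _)), filter_false;
    [apply removelast_last|].
  intros t Ht. apply in_seq in Ht. destruct (starts_at k t) eqn:D; [exfalso|easy].
  apply starts_at_le_leave in D; [lia|easy|lia].
Qed.

Lemma cyclic_children_iff :
  Sorted Z.lt (children n) /\ (forall k, 1 <= k < n -> cyc_cond (children k) k) <->
  out_gaps_increase.
Proof.
  assert (Hroot : Sorted Z.lt (children n) <->
                  Sorted Z.lt (map gap (filter (starts_at n) (seq 1 N)))).
  { unfold children. erewrite map_ext_in; [reflexivity|].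
    intros i [Hi D]%filter_In. apply in_seq in Hi. apply modn1_root_child; [lia|easy]. }
  assert (Hk : forall k, 1 <= k < n -> cyc_cond (children k) k <->
             Sorted Z.lt (map gap (filter (starts_at k) (seq 1 (leave k - 1))))).
  { intros k Hk. assert (Hkt : token k) by (unfold token; lia).
    pose proof (enter_lt_leave k Hkt).
    assert (Hne : children k <> []).
    { intros E. enough (Hin : In (modn1 n (y (leave k))) (children k)) by now rewrite E in Hin.
      apply (in_map (fun i => modn1 n (y i))), filter_In.
      split; [apply in_seq; lia|now apply starts_at_leave]. }
    rewrite (cyc_cond_iff n k Hk _ Hne (fun x Hx => children_range k x Hk Hx)).
    unfold children. rewrite map_removelast, removelast_starts_at, map_map by easy.
    erewrite map_ext_in; [reflexivity|].
    intros i [Hi D]%filter_In. apply in_seq in Hi. apply modn1_child; auto; lia. }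
  rewrite Hroot, sorted_map_filter_seq. split.
  - intros [Hn Hlt] k i i' Hk' Hii Di Di' Hb Hc.
    destruct (Z.eq_dec k n) as [->|Hkn]; [apply Hn; auto; lia|].
    destruct Hc as [|Hc]; [easy|].
    pose proof (proj1 (Hk k ltac:(lia)) (Hlt k ltac:(lia))) as Hs.
    rewrite sorted_map_filter_seq in Hs. apply Hs; auto; lia.
  - intros H. split.
    + intros i i' Hii Pi Pi' Hb. apply (H n); auto; lia.
    + intros k Hk'. apply Hk, sorted_map_filter_seq; [easy|]. intros i i' Hii Pi Pi' Hb.
      assert (Hkt : token k) by (unfold token; lia). pose proof (enter_lt_leave k Hkt).
      apply (H k); auto; lia.
Qed.

Lemma mval_path_mod j : mval_path j mod n = prefix_prod (j - 1) (y j) mod n.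
Proof.
  unfold mval_path. pose proof y0_mod as E. rewrite <- (Z.mod_0_l n) in E by lia.
  apply Z.cong_iff_ex in E as [c Hc]. apply Z.cong_iff_ex. exists (- c). lia.
Qed.

Lemma mval_path_ncong0 j : (1 <= j <= N)%nat -> mval_path j mod n <> 0 mod n.
Proof.
  intros Hj E. rewrite mval_path_mod, Z.mod_0_l, <- y0_mod in E by lia.
  rewrite <- (prefix_prod_y (j - 1)) in E by lia. apply prefix_prod_mod_inj in E.
  destruct j as [|i]; [lia|]. cbn in E. rewrite Nat.sub_0_r in E.
  now apply (y_ncong_succ i); [lia|].
Qed.

Lemma conj_prefix i x : (i < N)%nat ->
  prefix_prod i (refl n (y i) (y (S i)) (prefix_inv i x)) = refl n 0 (mval_path (S i)) x.
Proof.
  intros Hi. rewrite (refl_conj n _ (prefix_inv i)).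
  - rewrite prefix_prod_y by lia. apply refl_translate; [now rewrite y0_mod, Z.mod_0_l by lia|].
    unfold mval_path. cbn. rewrite Nat.sub_0_r. lia.
  - intros z. apply prefix_prod_inv. lia.
  - intros z. apply prefix_inv_prod. lia.
  - apply prefix_prod_add_mul.
  - now apply y_ncong_succ.
Qed.

Lemma cyclic_children_iff_mval_increasing :
  Sorted Z.lt (children n) /\ (forall k, 1 <= k < n -> cyc_cond (children k) k) <->
  forall j, (1 <= j < N)%nat -> mval_path j < mval_path (S j).
Proof.
  rewrite cyclic_children_iff, mval_path_increasing_iff.
  split; [apply sibling_of_out_gaps|apply out_gaps_of_sibling].
Qed.

End Path.

Lemma firstn_succ_app {A} (l : list A) j d : (j < length l)%nat ->
  firstn (S j) l = firstn j l ++ [nth j l d].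
Proof.
  revert j. induction l as [|x l IH]; intros j Hj; cbn in Hj; [lia|].
  destruct j as [|j]; [easy|].
  change (firstn (S (S j)) (x :: l)) with (x :: firstn (S j) l). now rewrite IH by lia.
Qed.

Lemma prodl_app_single l f x : prodl (l ++ [f]) x = prodl l (f x).
Proof. unfold prodl. induction l as [|g l IH]; [easy|]. cbn. now rewrite IH. Qed.

Lemma nthr_succ l j : nth j l (fun k => k) = nthr l (S j).
Proof. unfold nthr. cbn. now rewrite Nat.sub_0_r. Qed.

(* Consecutive pairs (a_{i-1}, b_i), (a_i, b_{i+1}) are translated to share the endpoint
   [tree_path a b i]. *)
Fixpoint tree_path (a b : nat -> Z) (i : nat) : Z :=
  match i with O => a O | S i' => tree_path a b i' + (b i - a i') end.

Section Factorization.
Variables (n : Z) (r : list (Z -> Z)) (a b : nat -> Z).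
Hypothesis n_ge2 : 2 <= n.
Hypothesis r_fact : in_fact n r.
Hypothesis r_tree : tree_like_with n r a b.

Let N := length r.
Let y := tree_path a b.

Lemma length_in_fact : Z.of_nat N = 2 * n - 2.
Proof. apply r_fact. Qed.

Lemma tree_path_mod i : (i < N)%nat -> y i mod n = a i mod n.
Proof.
  induction i as [|i IH]; intros Hi; [easy|].
  rewrite (proj2 r_tree (S i)) by (unfold N in Hi; lia).
  pose proof (IH ltac:(lia)) as [k Hk]%Z.cong_iff_ex.
  apply Z.cong_iff_ex. exists k. cbn. fold y. lia.
Qed.

Lemma nthr_tree_path i x : (i < N)%nat -> nthr r (S i) x = refl n (y i) (y (S i)) x.
Proof.
  intros Hi. rewrite (proj2 (proj1 r_tree (S i) ltac:(unfold N in Hi; lia))).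
  cbn. rewrite Nat.sub_0_r. apply refl_translate; [symmetry; apply tree_path_mod; lia|].
  fold y. lia.
Qed.

Lemma tree_path_lt_succ i : (i < N)%nat -> y i < y (S i).
Proof.
  intros Hi. pose proof (proj1 (proj1 r_tree (S i) ltac:(unfold N in Hi; lia))) as H.
  cbn in H |- *. rewrite Nat.sub_0_r in H. fold y. lia.
Qed.

Lemma tree_path_ncong_succ i : (i < N)%nat -> y i mod n <> y (S i) mod n.
Proof.
  intros Hi E. destruct r_fact as [_ [Hrefl _]].
  assert (Hr : is_reflection n (nthr r (S i))).
  { rewrite Forall_forall in Hrefl. apply Hrefl, nth_In. unfold N in Hi. lia. }
  destruct Hr as [c [d [Hcd Hr]]].
  assert (Hc : nthr r (S i) c mod n = c mod n).
  { rewrite nthr_tree_path by easy. now apply refl_mod_same. }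
  rewrite Hr in Hc. unfold refl in Hc. destruct (Z.eq_dec (c mod n) (c mod n)); [|easy].
  rewrite mod_translate in Hc; congruence.
Qed.


Lemma prodl_firstn_tree_path j x : (j <= N)%nat -> prodl (firstn j r) x = prefix_prod n y j x.
Proof.
  revert x. induction j as [|j IH]; intros x Hj; [easy|].
  rewrite (firstn_succ_app r j (fun k => k)), prodl_app_single, IH by lia.
  cbn [prefix_prod]. now rewrite nthr_succ, nthr_tree_path by lia.
Qed.

Lemma prodl_rev_firstn_tree_path j x : (j <= N)%nat ->
  prodl (rev (firstn j r)) x = prefix_inv n y j x.
Proof.
  revert x. induction j as [|j IH]; intros x Hj; [easy|].
  rewrite (firstn_succ_app r j (fun k => k)), rev_unit by lia. cbn [prodl fold_right prefix_inv].
  fold (prodl (rev (firstn j r))). rewrite IH by lia.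
  now rewrite nthr_succ, nthr_tree_path by lia.
Qed.

Lemma tree_path_prefix_N x : prefix_prod n y N x = lambda n x.
Proof.
  rewrite <- prodl_firstn_tree_path by lia. unfold N. rewrite firstn_all. apply r_fact.
Qed.

Lemma conjr_tree_path j x : (1 <= j <= N)%nat -> conjr r j x = refl n 0 (mval_path n y j) x.
Proof.
  intros Hj. destruct j as [|i]; [lia|]. unfold conjr. cbn [Nat.sub]. rewrite Nat.sub_0_r.
  rewrite prodl_firstn_tree_path, prodl_rev_firstn_tree_path, nthr_tree_path by lia.
  apply (conj_prefix n N); auto using length_in_fact, tree_path_lt_succ, tree_path_ncong_succ,
    tree_path_prefix_N; lia.
Qed.

Lemma mval_tree_path j : (1 <= j <= N)%nat -> mval r j = mval_path n y j.
Proof.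
  intros Hj. unfold mval. rewrite conjr_tree_path by easy. unfold refl.
  destruct (Z.eq_dec (0 mod n) (0 mod n)); [lia|easy].
Qed.

Lemma tree_like_ends a' b' i : tree_like_with n r a' b' -> (i < N)%nat ->
  a' i mod n = y i mod n /\ b' (S i) mod n = y (S i) mod n.
Proof.
  intros [Hab _] Hi. specialize (Hab (S i) ltac:(unfold N in Hi; lia)).
  cbn in Hab. rewrite Nat.sub_0_r in Hab.
  apply refl_ends_unique with (n := n); [easy|now apply tree_path_lt_succ|].
  intros x. rewrite <- (proj2 Hab), nthr_tree_path by easy. easy.
Qed.

Lemma Nr_tree_path a' b' k : tree_like_with n r a' b' -> Nr n r a' b' k = children n N y k.
Proof.
  intros Htl. unfold Nr, children, starts_at. fold N.
  assert (Hends : forall i, In i (seq 1 N) ->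
             a' (i - 1)%nat mod n = y (i - 1)%nat mod n /\ b' i mod n = y i mod n).
  { intros i Hi. apply in_seq in Hi. destruct i as [|i]; [lia|].
    cbn. rewrite Nat.sub_0_r. apply tree_like_ends; [easy|lia]. }
  rewrite (filter_ext_in _ (fun i => (y (i - 1)%nat - k) mod n =? 0)).
  - apply map_ext_in. intros i [Hi _]%filter_In. unfold modn1.
    now rewrite <- Zminus_mod_idemp_l, (proj2 (Hends i Hi)), Zminus_mod_idemp_l.
  - intros i Hi. now rewrite <- Zminus_mod_idemp_l, (proj1 (Hends i Hi)), Zminus_mod_idemp_l.
Qed.

Lemma cyclic_iff_children : cyclic n r <->
  Sorted Z.lt (children n N y n) /\ forall k, 1 <= k < n -> cyc_cond (children n N y k) k.
Proof.
  split.
  - intros [a' [b' [Htl [Hroot Hk]]]]. rewrite Nr_tree_path in Hroot by easy.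
    split; [easy|]. intros k Hk'. rewrite <- (Nr_tree_path a' b') by easy. now apply Hk.
  - intros [Hroot Hk]. exists a, b. split; [easy|]. rewrite Nr_tree_path by easy.
    split; [easy|]. intros k Hk'. rewrite Nr_tree_path by easy. now apply Hk.
Qed.

End Factorization.

Theorem proposition4p4 (n : Z) (r : list (Z -> Z)) :
  2 <= n -> in_fact n r -> tree_like n r ->
  (forall j : nat, (1 <= j <= length r)%nat ->
     mval r j mod n <> 0 mod n /\
     forall x, conjr r j x = refl n 0 (mval r j) x) /\
  (cyclic n r <->
   forall j : nat, (1 <= j < length r)%nat -> mval r j < mval r (S j)).
Proof.
  intros Hn Hfact [a [b Htl]].
  pose proof (length_in_fact n r Hfact) as HN.
  pose proof (tree_path_lt_succ n r a b Htl) as Hlt.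
  pose proof (tree_path_ncong_succ n r a b Hfact Htl) as Hncong.
  pose proof (tree_path_prefix_N n r a b Hfact Htl) as Hlam.
  assert (Hm : forall j, (1 <= j <= length r)%nat -> mval r j = mval_path n (tree_path a b) j)
    by now apply mval_tree_path.
  split.
  - intros j Hj. rewrite Hm by easy. split.
    + exact (mval_path_ncong0 n _ _ Hn HN Hlt Hncong Hlam j Hj).
    + intros x. now apply conjr_tree_path.
  - rewrite (cyclic_iff_children n r a b Htl),
      (cyclic_children_iff_mval_increasing n _ _ Hn HN Hlt Hncong Hlam).
    split; intros H j Hj; specialize (H j Hj); rewrite !Hm in * by lia; easy.
Qed.
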